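(* Let $n,m\ge 1$ be integers, $x_0<x_1<\dots<x_n$, $y_0<y_1<\dots<y_m$ real numbers and $z_{ij}\in\mathbf{R}$ for $0\le i\le n$, $0\le j\le m$. Put $I_{x_i}=[x_{i-1},x_i]$, $I_{y_j}=[y_{j-1},y_j]$, $I_x=[x_0,x_n]$, $I_y=[y_0,y_m]$, $E_{ij}=I_{x_i}\times I_{y_j}$, $E=I_x\times I_y$ and $N_{nm}=\{1,\dots,n\}\times\{1,\dots,m\}$. For $(i,j)\in N_{nm}$ let $L_{x_i}:I_x\to I_{x_i}$ and $L_{y_j}:I_y\to I_{y_j}$ be contraction homeomorphisms mapping the endpoints $\{x_0,x_n\}$ onto $\{x_{i-1},x_i\}$ and $\{y_0,y_m\}$ onto $\{y_{j-1},y_j\}$ respectively, and let $L_{ij}(x,y)=(L_{x_i}(x),L_{y_j}(y))$, $L_{ij}:E\to E_{ij}$. Let $q_\alpha:\{x_\alpha\}\times I_y\to\mathbf{R}$ ($\alpha=0,\dots,n$) be continuous functions with $q_\alpha(x_\alpha,y_l)=z_{\alpha l}$ for $l=0,\dots,m$, and $r_\beta:I_x\times\{y_\beta\}\to\mathbf{R}$ ($\beta=0,\dots,m$) be continuous functions with $r_\beta(x_k,y_\beta)=z_{k\beta}$ for $k=0,\dots,n$. For each $(i,j)\in N_{nm}$ let: - $s_{ij}:E_{ij}\to\mathbf{R}$ be a Lipschitz function with $|s_{ij}(x,y)|<1$ on $E_{ij}$ and $s_{ij}(x_{i-1},y)=s_{ij}(x_i,y)=0$ for $y\in I_{y_j}$,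 $s_{ij}(x,y_{j-1})=s_{ij}(x,y_j)=0$ for $x\in I_{x_i}$; - $g_{ij}:E\to\mathbf{R}$ be any Lipschitz function; - $h_{ij}:E_{ij}\to\mathbf{R}$ be a Lipschitz function with $h_{ij}=q_{i-1}$ on $\{x_{i-1}\}\times I_{y_j}$, $h_{ij}=q_i$ on $\{x_i\}\times I_{y_j}$, $h_{ij}=r_{j-1}$ on $I_{x_i}\times\{y_{j-1}\}$, $h_{ij}=r_j$ on $I_{x_i}\times\{y_j\}$; - $Q_{ij}(x,y)=-s_{ij}(L_{ij}(x,y))\,g_{ij}(x,y)+h_{ij}(L_{ij}(x,y))$ for $(x,y)\in E$; - $F_{ij}(x,y,z)=s_{ij}(L_{ij}(x,y))\,z+Q_{ij}(x,y)$ and $W_{ij}(x,y,z)=(L_{ij}(x,y),F_{ij}(x,y,z))$ for $(x,y,z)\in E\times\mathbf{R}$. Then the attractor $A$ of the iterated function system $\{W_{ij}:(i,j)\in N_{nm}\}$ is the graph of a continuous function $f:E\to\mathbf{R}$.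
   Context: The maps $W_{ij}$ are contractions with respect to the metric $\rho_\theta((x,y,z),(x',y',z'))=|x-x'|+|y-y'|+\theta|z-z'|$ on $\mathbf{R}^3$ for a suitable small $\theta>0$ (equivalent to the Euclidean metric). The attractor of the IFS is the unique nonempty compact set $A\subset E\times\mathbf{R}$ with $A=\bigcup_{(i,j)\in N_{nm}}W_{ij}(A)$. The graph of $f$ is $\{(x,y,f(x,y)):(x,y)\in E\}$. *)

From HB Require Import structures.
From mathcomp Require Import all_boot all_order all_algebra.
From mathcomp Require Import all_classical all_reals all_analysis.
Set Implicit Arguments. Unset Strict Implicit. Unset Printing Implicit Defensive.
Import Order.TTheory GRing.Theory Num.Theory.
Import numFieldNormedType.Exports.
Local Open Scope classical_set_scope.
Local Open Scope ring_scope.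

Section Defs.
Variable R : realType.

Definition cint (a b : R) : set R := [set t | a <= t <= b].

Definition rect (a b c d : R) : set (R * R) :=
  [set p | cint a b p.1 /\ cint c d p.2].

Definition contraction_on (A : set R) (f : R -> R) : Prop :=
  exists c : R, 0 <= c /\ c < 1 /\
    forall a b, A a -> A b -> `|f a - f b| <= c * `|a - b|.

Definition homeo_on (A B : set R) (f : R -> R) : Prop :=
  {within A, continuous f} /\
  exists g : R -> R, {within B, continuous g} /\
    (forall a, A a -> B (f a)) /\ (forall b, B b -> A (g b)) /\
    (forall a, A a -> g (f a) = a) /\ (forall b, B b -> f (g b) = b).

(* Lipschitz on a subset of R^2 (w.r.t. the l^1 metric, equivalent to the
   Euclidean one) *)
Definition lipschitz2_on (A : set (R * R)) (f : R * R -> R) : Prop :=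
  exists K : R, forall p p', A p -> A p' ->
    `|f p - f p'| <= K * (`|p.1 - p'.1| + `|p.2 - p'.2|).

Definition Lmap (Lx Ly : nat -> R -> R) (i j : nat) (p : R * R) : R * R :=
  (Lx i p.1, Ly j p.2).

Definition Qmap (Lx Ly : nat -> R -> R) (s g h : nat -> nat -> R * R -> R)
  (i j : nat) (p : R * R) : R :=
  - s i j (Lmap Lx Ly i j p) * g i j p + h i j (Lmap Lx Ly i j p).

Definition Fmap (Lx Ly : nat -> R -> R) (s g h : nat -> nat -> R * R -> R)
  (i j : nat) (w : (R * R) * R) : R :=
  s i j (Lmap Lx Ly i j w.1) * w.2 + Qmap Lx Ly s g h i j w.1.

Definition Wmap (Lx Ly : nat -> R -> R) (s g h : nat -> nat -> R * R -> R)
  (i j : nat) (w : (R * R) * R) : (R * R) * R :=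
  (Lmap Lx Ly i j w.1, Fmap Lx Ly s g h i j w).

Definition hutchinson (n m : nat) (Lx Ly : nat -> R -> R)
  (s g h : nat -> nat -> R * R -> R) (A : set ((R * R) * R)) : set ((R * R) * R) :=
  [set w | exists i j, (1 <= i <= n)%N /\ (1 <= j <= m)%N /\
     exists a, A a /\ w = Wmap Lx Ly s g h i j a].

Definition graph_on (E : set (R * R)) (f : R * R -> R) : set ((R * R) * R) :=
  [set w | E w.1 /\ w.2 = f w.1].

End Defs.

From HB Require Import structures.
From mathcomp Require Import all_boot all_order all_algebra.
From mathcomp Require Import all_classical all_reals all_analysis.
From mathcomp Require Import ring lra zify.
Import Order.TTheory GRing.Theory Num.Theory.
Import numFieldNormedType.Exports.
Local Open Scope classical_set_scope.
Local Open Scope ring_scope.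
Set Implicit Arguments. Unset Strict Implicit. Unset Printing Implicit Defensive.

(* The attractor is the graph of the fixed point of the Read-Bajraktarevic operator
     (T f)(p) = s_ij(p) * (f - g_ij)(L_ij^-1 p) + h_ij(p)      for p in E_ij.
   T is well defined because on an edge shared by two cells s vanishes and both
   pieces reduce to the same q_i or r_j; it preserves continuity by the pasting
   lemma over the closed cells, and it contracts the sup-distance by
   sigma = max |s_ij| < 1.  Its iterates thus converge uniformly to a continuous f
   with T f = f, which says exactly that W_ij maps the graph of f onto the graph of
   f over E_ij.  Conversely, if A is compact and invariant, each W_ij shrinks the
   vertical distance to the graph by sigma, so A lies in the graph; and since the
   L_ij contract, the projection of A is dense in E, so closedness of A and
   continuity of f put the whole graph in A. *)

Section Topology.
Context {T U : topologicalType}.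

Lemma subspace_continuous_comp {V : topologicalType} (A : set T) (B : set U)
    (f : T -> U) (g : U -> V) :
  (forall a, A a -> B (f a)) -> {within A, continuous f} ->
  {within B, continuous g} -> {within A, continuous (g \o f)}.
Proof.
move=> fAB /subspace_continuousP cf /subspace_continuousP cg.
apply/subspace_continuousP => a Aa; apply: cvg_trans (cg _ (fAB _ Aa)).
move=> W /= BW; have := cf a Aa _ BW.
apply: filterS2 (withinT A (@nbhs_filter T a)) => b Ab; exact: (@^~ (fAB b Ab)).
Qed.

Lemma within_bigsetU_continuous (I : eqType) (s : seq I) (C : I -> set T) (f : T -> U) :
  (forall i, i \in s -> closed (C i) /\ {within C i, continuous f}) ->
  {within \big[setU/set0]_(i <- s) C i, continuous f}.
Proof.
elim: s => [_|i s IH sC]; first by rewrite big_nil; exact: continuous_subspace0.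
have [Ci fCi] := sC i (mem_head _ _).
have sC' j : j \in s -> closed (C j) /\ {within C j, continuous f}.
  by move=> js; apply: sC; rewrite inE js orbT.
rewrite big_cons; apply: withinU_continuous => //; last exact: IH.
by apply: closed_bigsetU => j /sC' [].
Qed.

End Topology.

Section RealFacts.
Variable R : realType.

Lemma within_continuousP (T : pseudoMetricType R) (A : set T) (f : T -> R) :
  {within A, continuous f} <->
  (forall a, A a -> forall e : R, 0 < e -> exists2 d : R, 0 < d &
     forall b, A b -> ball a d b -> `|f a - f b| < e).
Proof.
rewrite subspace_continuousP; split => [fA a Aa e e0 | fA a Aa].
  have /cvgrPdist_lt /(_ e e0) /nbhs_ballP [d d0 ad] := fA a Aa.
  by exists d => // b Ab /ad; apply.
apply/cvgrPdist_lt => e e0; have [d d0 ad] := fA a Aa e e0.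
by apply/nbhs_ballP; exists d => // b /[swap]; exact: ad.
Qed.

Lemma ball_pairE (a b : R * R) (e : R) :
  ball a e b <-> `|a.1 - b.1| < e /\ `|a.2 - b.2| < e.
Proof.
by change (ball a e b) with (ball a.1 e b.1 /\ ball a.2 e b.2); rewrite -!ball_normE.
Qed.

Lemma geometric_lt (D c e : R) : 0 <= D -> 0 <= c -> c < 1 -> 0 < e ->
  exists k, D * c ^+ k < e.
Proof.
move=> D0 c0 c1 e0; have D1 : 0 < D + 1 by rewrite ltr_wpDl.
have /cvg_expr : `|c| < 1 by rewrite ger0_norm.
move=> /cvgrPdist_lt /(_ _ (divr_gt0 e0 D1)) [k _ ck]; exists k.
have {ck} : c ^+ k < e / (D + 1).
  by have := ck k (leqnn k); rewrite sub0r normrN ger0_norm ?exprn_ge0.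
rewrite ltr_pdivlMr // mulrC; apply: le_lt_trans.
by rewrite ler_wpM2r ?exprn_ge0 // lerDl.
Qed.

Lemma geometric_bound_eq0 (a D c : R) : 0 <= c -> c < 1 ->
  (forall k, `|a| <= D * c ^+ k) -> a = 0.
Proof.
move=> c0 c1 aD; apply/eqP/negPn/negP => a0.
have D0 : 0 <= D by have := aD 0%N; rewrite mulr1; exact: le_trans.
have a_gt0 : 0 < `|a| by rewrite normr_gt0.
by have [k] := geometric_lt D0 c0 c1 a_gt0; rewrite ltNge aD.
Qed.

Lemma compact_norm_max (T : topologicalType) (A : set T) (f : T -> R) :
  compact A -> A !=set0 -> {within A, continuous f} ->
  exists2 a, A a & forall b, A b -> `|f b| <= `|f a|.
Proof.
move=> cA A0 fA; have nfA : {within A, continuous (fun a => `|f a|)}.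
  by move=> a; apply: continuous_comp (fA a) _; exact: norm_continuous.
have [a Aa aM] := compact_EVT_max A0 cA nfA.
by exists a; [rewrite inE in Aa | move=> b Ab; apply: aM; rewrite inE].
Qed.

Lemma seq_uniform_bound (I : eqType) (s : seq I) (P : I -> R -> Prop) :
  (forall i c c', c <= c' -> P i c -> P i c') ->
  (forall i, i \in s -> exists2 c, c < 1 & P i c) ->
  exists c, [/\ 0 <= c, c < 1 & forall i, i \in s -> P i c].
Proof.
move=> Pmono; elim: s => [_|i s IH sP]; first by exists 0.
have [c [c0 c1 cP]] : exists c, [/\ 0 <= c, c < 1 & forall j, j \in s -> P j c].
  by apply: IH => j js; apply: sP; rewrite inE js orbT.
have [c' c'1 c'P] := sP i (mem_head _ _).
exists (Num.max c c'); split; rewrite ?le_max ?c0 ?gt_max ?c1 ?c'1 //.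
move=> j; rewrite inE => /orP [/eqP -> | js].
  by apply: Pmono c'P; rewrite le_max lexx orbT.
by apply: Pmono (cP j js); rewrite le_max lexx.
Qed.

Lemma lipschitz2_on_continuous (A : set (R * R)) (f : R * R -> R) :
  lipschitz2_on A f -> {within A, continuous f}.
Proof.
move=> [K fK]; apply/within_continuousP => p Ap e e0.
have K1 : 0 < `|K| + 1 by rewrite ltr_wpDl.
exists (e / (2 * (`|K| + 1))) => [|p' Ap' /ball_pairE [p1 p2]].
  by rewrite divr_gt0 // mulr_gt0.
apply: le_lt_trans (fK p p' Ap Ap') _.
apply: (@le_lt_trans _ _ ((`|K| + 1) * (`|p.1 - p'.1| + `|p.2 - p'.2|))).
  by rewrite ler_wpM2r ?addr_ge0 // (le_trans (ler_norm K)) // lerDl.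
rewrite mulrC -ltr_pdivlMr //.
have -> : e / (`|K| + 1) = e / (2 * (`|K| + 1)) + e / (2 * (`|K| + 1)).
  by field; rewrite lt0r_neq0.
exact: ltrD.
Qed.

Lemma rect_compact (a b c d : R) : compact (rect a b c d).
Proof.
have -> : rect a b c d = `[a, b] `*` `[c, d].
  by apply/seteqP; split => p; rewrite /rect /cint /= !in_itv.
by apply: compact_setX; exact: segment_compact.
Qed.

Lemma rect_closed (a b c d : R) : closed (rect a b c d).
Proof. by apply: compact_closed; [exact: norm_hausdorff | exact: rect_compact]. Qed.

End RealFacts.

Section Partition.
Variables (R : realType) (x : nat -> R) (n : nat).
Hypothesis x_incr : forall i, (i < n)%N -> x i < x i.+1.

Lemma partition_lt i k : (i < k <= n)%N -> x i < x k.
Proof.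
elim: k => [//|k IH] /andP[]; rewrite ltnS leq_eqVlt => /orP[/eqP -> | ik] kn.
  exact: x_incr.
by apply: lt_trans (x_incr kn); apply: IH; rewrite ik ltnW.
Qed.

Lemma partition_le i k : (i <= k <= n)%N -> x i <= x k.
Proof.
case/andP; rewrite leq_eqVlt => /orP[/eqP -> // | ik] kn.
by apply/ltW/partition_lt; rewrite ik.
Qed.

Lemma partition_cover t : (1 <= n)%N -> x 0 <= t <= x n ->
  exists2 i, (1 <= i <= n)%N & x i.-1 <= t <= x i.
Proof.
move=> n1 /andP[t0 tn].
case: (ex_minnP (ex_intro (fun k => t <= x k) n tn)) => k tk kmin.
have kn : (k <= n)%N := kmin n tn.
case: k => [|k] in tk kn kmin *.
  by exists 1%N; rewrite ?n1 //= t0 (le_trans tk) //; apply: partition_le; rewrite n1.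
exists k.+1 => //=; rewrite tk andbT.
by rewrite leNgt; apply/negP => /ltW /kmin; rewrite ltnn.
Qed.

Lemma partition_overlap i i' t : (1 <= i)%N -> (i < i' <= n)%N ->
  x i.-1 <= t <= x i -> x i'.-1 <= t <= x i' -> i' = i.+1 /\ t = x i.
Proof.
move=> i1 /andP[ii' i'n] /andP[ti1 ti] /andP[ti'1 ti'].
case: (ltngtP i i'.-1) => [ii'1 | | ei]; last 1 first.
- have ei' : i' = i.+1 by lia.
  by subst i'; split => //; apply/eqP; rewrite eq_le ti.
- have : x i < x i'.-1 by apply: partition_lt; rewrite ii'1 (leq_trans (leq_pred _)).
  lra.
- lia.
Qed.

End Partition.

Section IntervalMaps.
Variable R : realType.

Definition continuous_inverse_on (A B : set R) (f g : R -> R) : Prop :=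
  {within B, continuous g} /\
  (forall a, A a -> B (f a)) /\ (forall b, B b -> A (g b)) /\
  (forall a, A a -> g (f a) = a) /\ (forall b, B b -> f (g b) = b).

Lemma continuous_inverse_family (A : set R) (B : nat -> set R)
    (L : nat -> R -> R) (P : nat -> Prop) :
  (forall i, P i -> homeo_on A (B i) (L i)) ->
  exists G : nat -> R -> R, forall i, P i -> continuous_inverse_on A (B i) (L i) (G i).
Proof.
move=> hL; suff [G HG] : {G : nat -> R -> R &
  forall i, P i -> continuous_inverse_on A (B i) (L i) (G i)} by exists G.
apply: (@choice _ _ (fun i Gi => P i -> continuous_inverse_on A (B i) (L i) Gi)) => i.
case: (pselect (P i)) => [/hL [_ [Gi HGi]] | NPi]; first by exists Gi.
by exists id.
Qed.

Lemma uniform_contraction (A : set R) (L : nat -> R -> R) (N : nat) :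
  (forall i, (1 <= i <= N)%N -> contraction_on A (L i)) ->
  exists c, [/\ 0 <= c, c < 1 & forall i, (1 <= i <= N)%N ->
    forall a b, A a -> A b -> `|L i a - L i b| <= c * `|a - b|].
Proof.
pose P i c := forall a b, A a -> A b -> `|L i a - L i b| <= c * `|a - b|.
move=> hL; have Pmono i c c' : c <= c' -> P i c -> P i c'.
  by move=> cc' Lc a b Aa Ab; apply: le_trans (Lc a b Aa Ab) _; rewrite ler_wpM2r.
have [|c [c0 c1 cL]] := seq_uniform_bound (s := iota 1 N) Pmono.
  by move=> i; rewrite mem_iota add1n ltnS => /hL [c [_ [c1 Lc]]]; exists c.
by exists c; split => // i iN; apply: cL; rewrite mem_iota add1n ltnS.
Qed.

End IntervalMaps.

Section ReadBajraktarevic.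
Variables (R : realType) (n m : nat) (x y : nat -> R) (Lx Ly : nat -> R -> R).
Variables (s g h : nat -> nat -> R * R -> R) (q r : nat -> R -> R).
Hypotheses (n1 : (1 <= n)%N) (m1 : (1 <= m)%N).
Hypothesis x_incr : forall i, (i < n)%N -> x i < x i.+1.
Hypothesis y_incr : forall j, (j < m)%N -> y j < y j.+1.
Hypothesis Lx_homeo : forall i, (1 <= i <= n)%N ->
  homeo_on (cint (x 0) (x n)) (cint (x i.-1) (x i)) (Lx i).
Hypothesis Ly_homeo : forall j, (1 <= j <= m)%N ->
  homeo_on (cint (y 0) (y m)) (cint (y j.-1) (y j)) (Ly j).
Hypothesis Lx_contraction : forall i, (1 <= i <= n)%N ->
  contraction_on (cint (x 0) (x n)) (Lx i).
Hypothesis Ly_contraction : forall j, (1 <= j <= m)%N ->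
  contraction_on (cint (y 0) (y m)) (Ly j).

Definition E := rect (x 0) (x n) (y 0) (y m).
Definition cell i j := rect (x i.-1) (x i) (y j.-1) (y j).
Definition in_cell i j p := [/\ (1 <= i <= n)%N, (1 <= j <= m)%N & cell i j p].

Hypothesis cell_data : forall i j, (1 <= i <= n)%N -> (1 <= j <= m)%N ->
  lipschitz2_on (cell i j) (s i j) /\ (forall p, cell i j p -> `|s i j p| < 1) /\
  (forall t, cint (y j.-1) (y j) t -> s i j (x i.-1, t) = 0 /\ s i j (x i, t) = 0) /\
  (forall t, cint (x i.-1) (x i) t -> s i j (t, y j.-1) = 0 /\ s i j (t, y j) = 0) /\
  lipschitz2_on E (g i j) /\ lipschitz2_on (cell i j) (h i j) /\
  (forall t, cint (y j.-1) (y j) t ->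
     h i j (x i.-1, t) = q i.-1 t /\ h i j (x i, t) = q i t) /\
  (forall t, cint (x i.-1) (x i) t ->
     h i j (t, y j.-1) = r j.-1 t /\ h i j (t, y j) = r j t).

Lemma in_cell_E i j p : in_cell i j p -> E p.
Proof.
case=> /andP[i1 iN] /andP[j1 jm] [/andP[xi1 xi] /andP[yj1 yj]].
have le_x k k' : (k <= k' <= n)%N -> x k <= x k' by apply: partition_le.
have le_y k k' : (k <= k' <= m)%N -> y k <= y k' by apply: partition_le.
split; apply/andP; split.
- by apply: le_trans xi1; apply: le_x; lia.
- by apply: le_trans xi _; apply: le_x; lia.
- by apply: le_trans yj1; apply: le_y; lia.
- by apply: le_trans yj _; apply: le_y; lia.
Qed.

Lemma E_cover p : E p -> exists i j, in_cell i j p.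
Proof.
case=> /(partition_cover x_incr n1) [i ir xi] /(partition_cover y_incr m1) [j jr yj].
by exists i, j; split.
Qed.

Lemma E_neq0 : E !=set0.
Proof.
exists (x 0, y 0).
by split; rewrite /cint /= lexx ?(partition_le x_incr) ?(partition_le y_incr) ?leqnn.
Qed.

Lemma s_continuous i j : (1 <= i <= n)%N -> (1 <= j <= m)%N ->
  {within cell i j, continuous (s i j)}.
Proof. by move=> ir jr; case: (cell_data ir jr) => /lipschitz2_on_continuous. Qed.

Lemma g_continuous i j : (1 <= i <= n)%N -> (1 <= j <= m)%N ->
  {within E, continuous (g i j)}.
Proof.
by move=> ir jr; case: (cell_data ir jr) => _ [_ [_ [_ [/lipschitz2_on_continuous]]]].
Qed.

Lemma h_continuous i j : (1 <= i <= n)%N -> (1 <= j <= m)%N ->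
  {within cell i j, continuous (h i j)}.
Proof.
by move=> ir jr; case: (cell_data ir jr) => _ [_ [_ [_ [_ [/lipschitz2_on_continuous]]]]].
Qed.

Definition cells := [seq (i, j) | i <- iota 1 n, j <- iota 1 m].

Lemma mem_cells ij : (ij \in cells) = (1 <= ij.1 <= n)%N && (1 <= ij.2 <= m)%N.
Proof.
have iotaE k N : (k \in iota 1 N) = (1 <= k <= N)%N by rewrite mem_iota add1n ltnS.
case: ij => i j; rewrite -!iotaE.
by apply/allpairsP/andP => [[[i' j'] [/= ? ? [-> ->]]] | [? ?]] //; exists (i, j).
Qed.

Lemma E_cellsE : E = \big[setU/set0]_(ij <- cells) cell ij.1 ij.2.
Proof.
rewrite -bigcup_seq; apply/seteqP; split => [p /E_cover [i [j [ir jr Cp]]] | p].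
  by exists (i, j); rewrite //= mem_cells ir jr.
case=> -[i j] /=; rewrite mem_cells => /andP[ir jr] Cp.
exact: (in_cell_E (And3 ir jr Cp)).
Qed.

Lemma s_uniform_bound : exists sig, [/\ 0 <= sig, sig < 1 &
  forall i j p, in_cell i j p -> `|s i j p| <= sig].
Proof.
pose P ij c := forall p, cell ij.1 ij.2 p -> `|s ij.1 ij.2 p| <= c.
have Pmono ij c c' : c <= c' -> P ij c -> P ij c'.
  by move=> cc' sc p Cp; apply: le_trans (sc p Cp) cc'.
have [ [i j] | sig [sig0 sig1 sigP]] := seq_uniform_bound (s := cells) Pmono.
  rewrite mem_cells => /andP[ir jr].
  case: (pselect (cell i j !=set0)) => [C0 | C0]; last first.
    by exists 0 => // p Cp; case: C0; exists p.
  have [p0 Cp0 p0max] := compact_norm_max (@rect_compact R _ _ _ _) C0 (s_continuous ir jr).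
  by exists `|s i j p0|; [case: (cell_data ir jr) => _ [+ _]; apply | ].
exists sig; split => // i j p [ir jr Cp].
by apply: (sigP (i, j)); rewrite ?mem_cells ?ir.
Qed.

Section Operator.
Variables (gx gy : nat -> R -> R) (sig : R).
Hypothesis gx_inv : forall i, (1 <= i <= n)%N ->
  continuous_inverse_on (cint (x 0) (x n)) (cint (x i.-1) (x i)) (Lx i) (gx i).
Hypothesis gy_inv : forall j, (1 <= j <= m)%N ->
  continuous_inverse_on (cint (y 0) (y m)) (cint (y j.-1) (y j)) (Ly j) (gy j).
Hypotheses (sig0 : 0 <= sig) (sig1 : sig < 1).
Hypothesis sigP : forall i j p, in_cell i j p -> `|s i j p| <= sig.

Definition Linv i j (p : R * R) := (gx i p.1, gy j p.2).

Lemma Linv_E i j p : in_cell i j p -> E (Linv i j p).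
Proof.
case=> /gx_inv [_ [_ [gxE _]]] /gy_inv [_ [_ [gyE _]]] [Cp1 Cp2].
by split; [exact: gxE | exact: gyE].
Qed.

Lemma Lmap_Linv i j p : in_cell i j p -> Lmap Lx Ly i j (Linv i j p) = p.
Proof.
case: p => a b [/gx_inv [_ [_ [_ [_ Lgx]]]] /gy_inv [_ [_ [_ [_ Lgy]]]] [Ca Cb]].
by rewrite /Lmap /= Lgx // Lgy.
Qed.

Lemma Linv_Lmap i j p : (1 <= i <= n)%N -> (1 <= j <= m)%N -> E p ->
  Linv i j (Lmap Lx Ly i j p) = p.
Proof.
case: p => a b /gx_inv [_ [_ [_ [gLx _]]]] /gy_inv [_ [_ [_ [gLy _]]]] [Ea Eb].
by rewrite /Linv /= gLx // gLy.
Qed.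

Lemma Lmap_in_cell i j p : (1 <= i <= n)%N -> (1 <= j <= m)%N -> E p ->
  in_cell i j (Lmap Lx Ly i j p).
Proof.
move=> ir jr [Ep1 Ep2]; have [_ [Lx_cell _]] := gx_inv ir.
by have [_ [Ly_cell _]] := gy_inv jr; split => //; split; [exact: Lx_cell | exact: Ly_cell].
Qed.

Lemma Linv_continuous i j : (1 <= i <= n)%N -> (1 <= j <= m)%N ->
  {within cell i j, continuous (Linv i j)}.
Proof.
move=> /gx_inv [gx_cont _] /gy_inv [gy_cont _] p.
apply: (cvg_pair (G := nbhs _) (H := nbhs _)).
- apply: (subspace_continuous_comp (f := fst) _ _ gx_cont) => [? [] // | ].
  by apply: continuous_subspaceT => ?; exact: cvg_fst.
- apply: (subspace_continuous_comp (f := snd) _ _ gy_cont) => [? [] // | ].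
  by apply: continuous_subspaceT => ?; exact: cvg_snd.
Qed.

Definition piece i j (f : R * R -> R) p :=
  s i j p * (f (Linv i j p) - g i j (Linv i j p)) + h i j p.

(* [xget] picks some cell containing [p]; by [piece_indep] the choice is
   irrelevant, and outside [E] the value is junk. *)
Definition rb (f : R * R -> R) p :=
  let ij := xget (0%N, 0%N) [set ij | in_cell ij.1 ij.2 p] in piece ij.1 ij.2 f p.

Lemma piece_eq_x i i' j j' f p : (i < i')%N ->
  in_cell i j p -> in_cell i' j' p -> piece i j f p = piece i' j' f p.
Proof.
case: p => a b ii' [ir jr [/= Ca Cb]] [i'r j'r [/= C'a C'b]].
have /andP[i1 _] := ir; have /andP[_ i'n] := i'r.
have ii'n : (i < i' <= n)%N by rewrite ii' i'n.
have [ei' ->] := partition_overlap x_incr i1 ii'n Ca C'a; subst i'; rewrite /piece.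
have [_ [_ [/(_ b Cb) [_ ->] [_ [_ [_ [/(_ b Cb) [_ ->] _]]]]]]] := cell_data ir jr.
have [_ [_ [/(_ b C'b) [-> _] [_ [_ [_ [/(_ b C'b) [-> _] _]]]]]]] := cell_data i'r j'r.
by rewrite !mul0r.
Qed.

Lemma piece_eq_y i j j' f p : (j < j')%N ->
  in_cell i j p -> in_cell i j' p -> piece i j f p = piece i j' f p.
Proof.
case: p => a b jj' [ir jr [/= Ca Cb]] [_ j'r [/= _ C'b]].
have /andP[j1 _] := jr; have /andP[_ j'm] := j'r.
have jj'm : (j < j' <= m)%N by rewrite jj' j'm.
have [ej' ->] := partition_overlap y_incr j1 jj'm Cb C'b; subst j'; rewrite /piece.
have [_ [_ [_ [/(_ a Ca) [_ ->] [_ [_ [_ /(_ a Ca) [_ ->]]]]]]]] := cell_data ir jr.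
have [_ [_ [_ [/(_ a Ca) [-> _] [_ [_ [_ /(_ a Ca) [-> _]]]]]]]] := cell_data ir j'r.
by rewrite !mul0r.
Qed.

Lemma piece_indep i j i' j' f p : in_cell i j p -> in_cell i' j' p ->
  piece i j f p = piece i' j' f p.
Proof.
move=> Cp C'p; have [ii' | i'i | ei] := ltngtP i i'.
- exact: piece_eq_x.
- by apply/esym/piece_eq_x.
subst i'; have [jj' | j'j | <- //] := ltngtP j j'.
- exact: piece_eq_y.
- by apply/esym/piece_eq_y.
Qed.

Lemma rb_cell i j f p : in_cell i j p -> rb f p = piece i j f p.
Proof.
move=> Cp; symmetry; apply: (piece_indep f Cp).
exact: (xgetI (P := [set ij | in_cell ij.1 ij.2 p]) _ (x := (i, j)) Cp).
Qed.

Lemma piece_continuous i j f : (1 <= i <= n)%N -> (1 <= j <= m)%N ->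
  {within E, continuous f} -> {within cell i j, continuous (piece i j f)}.
Proof.
move=> ir jr f_cont.
have LE p : cell i j p -> E (Linv i j p) by move=> Cp; apply: Linv_E.
have := subspace_continuous_comp LE (Linv_continuous ir jr).
move=> /[dup] /(_ _ _ f_cont) fL /(_ _ _ (g_continuous ir jr)) gL.
have [sC hC] := (s_continuous ir jr, h_continuous ir jr) => p.
exact: (continuousD (continuousM (sC p) (continuousB (fL p) (gL p))) (hC p)).
Qed.

Lemma rb_continuous f : {within E, continuous f} -> {within E, continuous (rb f)}.
Proof.
move=> f_cont; rewrite E_cellsE; apply: within_bigsetU_continuous => -[i j].
rewrite mem_cells => /andP[ir jr]; split; first exact: rect_closed.
apply: subspace_eq_continuous (piece_continuous ir jr f_cont) => p /set_mem Cp.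
exact/esym/(rb_cell f (And3 ir jr Cp)).
Qed.

Lemma rb_contract f1 f2 B : (forall p, E p -> `|f1 p - f2 p| <= B) ->
  forall p, E p -> `|rb f1 p - rb f2 p| <= sig * B.
Proof.
move=> f12 p /E_cover [i [j Cp]]; rewrite !(rb_cell _ Cp) /piece.
have -> (a u v w c : R) : a * (u - w) + c - (a * (v - w) + c) = a * (u - v) by ring.
by rewrite normrM ler_pM // ?sigP //; exact: f12 (Linv_E Cp).
Qed.

Definition rb_iter k := iter k rb (fun _ => 0).

Lemma rb_iter_continuous k : {within E, continuous (rb_iter k)}.
Proof.
elim: k => [|k IH]; last exact: rb_continuous.
by apply: continuous_subspaceT; exact: cst_continuous.
Qed.

Section Iterates.
Variable M : R.
Hypothesis M_ge0 : 0 <= M.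
Hypothesis rb0_bound : forall p, E p -> `|rb (fun _ => 0) p| <= M.

Let C := M / (1 - sig).

Let C_ge0 : 0 <= C. Proof. by rewrite divr_ge0 // subr_ge0 ltW. Qed.

Lemma rb_iter_cauchy k j p : E p ->
  `|rb_iter (k + j) p - rb_iter k p| <= C * (sig ^+ k - sig ^+ (k + j)).
Proof.
move=> Ep; have MC : M = C * (1 - sig) by rewrite /C divfK // subr_eq0 gt_eqF.
have step i : `|rb_iter i.+1 p - rb_iter i p| <= M * sig ^+ i.
  elim: i p Ep => [|i IH] p' Ep'; first by rewrite mulr1 subr0; exact: rb0_bound.
  by rewrite exprS mulrCA; apply: rb_contract.
elim: j => [|j IH]; first by rewrite addn0 !subrr normr0 mulr0.
rewrite addnS (le_trans (ler_distD (rb_iter (k + j) p) _ _)) //.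
have -> : C * (sig ^+ k - sig ^+ (k + j).+1) =
          C * (sig ^+ k - sig ^+ (k + j)) + M * sig ^+ (k + j) by rewrite MC exprS; ring.
by rewrite addrC lerD.
Qed.

(* The uniform limit of the iterates, written as the supremum of their lower
   bounds so that no separate convergence argument is needed. *)
Definition rb_fix p := sup (range (fun k => rb_iter k p - C * sig ^+ k)).

Lemma rb_fix_approx k p : E p -> `|rb_fix p - rb_iter k p| <= C * sig ^+ k.
Proof.
move=> Ep; pose lb := range (fun k => rb_iter k p - C * sig ^+ k).
have ub : ubound lb (rb_iter k p + C * sig ^+ k).
  move=> _ [j _ <-]; have Cj : 0 <= C * sig ^+ j by rewrite mulr_ge0 ?exprn_ge0.
  have Ck : 0 <= C * sig ^+ k by rewrite mulr_ge0 ?exprn_ge0.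
  have [kj | jk] := leqP k j.
    have := rb_iter_cauchy k (j - k) Ep; rewrite subnKC // mulrBr.
    by move=> /ler_normlP[_]; lra.
  have := rb_iter_cauchy j (k - j) Ep; rewrite (subnKC (ltnW jk)) mulrBr.
  by move=> /ler_normlP[+ _]; lra.
have hs : has_sup lb.
  by split; [exists (rb_iter k p - C * sig ^+ k), k | exists (rb_iter k p + C * sig ^+ k)].
have : rb_iter k p - C * sig ^+ k <= rb_fix p by apply: (sup_upper_bound hs); exists k.
have : rb_fix p <= rb_iter k p + C * sig ^+ k by exact: ge_sup (proj1 hs) ub.
by move=> *; apply/ler_normlP; split; lra.
Qed.

Lemma rb_fix_continuous : {within E, continuous rb_fix}.
Proof.
apply/within_continuousP => p Ep e e0; have e3 : 0 < e / 3 by rewrite divr_gt0.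
have [k Ck] := geometric_lt C_ge0 sig0 sig1 e3.
have [d d0 kd] := iffLR (within_continuousP _ _) (rb_iter_continuous (k := k)) p Ep _ e3.
exists d => // p' Ep' pp'; have := kd p' Ep' pp'.
have := rb_fix_approx k Ep; have := rb_fix_approx k Ep'.
move=> /ler_normlP[? ?] /ler_normlP[? ?] /ltr_normlP[? ?].
by apply/ltr_normlP; split; lra.
Qed.

Lemma rb_fix_fixed p : E p -> rb rb_fix p = rb_fix p.
Proof.
move=> Ep; apply/subr0_eq/(geometric_bound_eq0 (D := 2 * C) sig0 sig1) => k.
have := rb_contract (fun p' Ep' => rb_fix_approx k Ep') Ep.
have := rb_fix_approx k.+1 Ep; rewrite exprS /=.
have Ck : 0 <= C * sig ^+ k by rewrite mulr_ge0 ?exprn_ge0.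
have : sig * (C * sig ^+ k) <= C * sig ^+ k by rewrite ler_piMl // ltW.
move=> ? /ler_normlP[? ?] /ler_normlP[? ?].
by apply/ler_normlP; split; nra.
Qed.

End Iterates.

Lemma rb_fixpoint : exists f, {within E, continuous f} /\ forall p, E p -> rb f p = f p.
Proof.
have [p0 _ p0max] := compact_norm_max (@rect_compact R _ _ _ _) E_neq0
  (rb_iter_continuous (k := 1)).
exists (rb_fix `|rb (fun _ => 0) p0|).
by split; [apply: rb_fix_continuous | move=> p; apply: rb_fix_fixed].
Qed.

Lemma invariant_base_dense (A : set ((R * R) * R)) :
  A !=set0 -> A `<=` E `*` setT -> hutchinson n m Lx Ly s g h A `<=` A ->
  forall p e, E p -> 0 < e ->
  exists2 a, A a & `|a.1.1 - p.1| < e /\ `|a.1.2 - p.2| < e.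
Proof.
move=> [a0 Aa0] AE HA p e Ep e0.
have [cx [cx0 cx1 Lx_c]] := uniform_contraction Lx_contraction.
have [cy [cy0 cy1 Ly_c]] := uniform_contraction Ly_contraction.
pose c := Num.max cx cy; pose D := (x n - x 0) + (y m - y 0).
have approx k p' : E p' -> exists2 a, A a &
    `|a.1.1 - p'.1| <= c ^+ k * D /\ `|a.1.2 - p'.2| <= c ^+ k * D.
  elim: k p' => [|k IH] p' Ep'.
    exists a0 => //; rewrite expr0 mul1r.
    have [[/andP[? ?] /andP[? ?]] _] := AE a0 Aa0; case: Ep' => /andP[? ?] /andP[? ?].
    by rewrite /D; split; apply/ler_normlP; split; lra.
  have [i [j Cp]] := E_cover Ep'; have [ir jr _] := Cp.
  have [a Aa [a1 a2]] := IH _ (Linv_E Cp); have [[Ea1 Ea2] _] := AE a Aa.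
  have [EL1 EL2] := Linv_E Cp.
  exists (Wmap Lx Ly s g h i j a).
    by apply: HA; exists i, j; do 2!split => //; exists a.
  rewrite -[in X in `|_ - X.1|](Lmap_Linv Cp) -[in X in `|_ - X.2|](Lmap_Linv Cp) /=.
  rewrite exprS -mulrA; split.
    by apply: le_trans (Lx_c i ir _ _ Ea1 EL1) _; rewrite ler_pM ?le_max ?lexx.
  by apply: le_trans (Ly_c j jr _ _ Ea2 EL2) _; rewrite ler_pM ?le_max ?lexx ?orbT.
have D0 : 0 <= D.
  by case: E_neq0 => -[u v] [/andP[? ?] /andP[? ?]]; rewrite /D; lra.
have c0 : 0 <= c by rewrite le_max cx0.
have c1 : c < 1 by rewrite gt_max cx1 cy1.
have [k ck] := geometric_lt D0 c0 c1 e0.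
have [a Aa [a1 a2]] := approx k p Ep.
by exists a => //; split; apply: le_lt_trans ck; rewrite mulrC.
Qed.

Section Graph.
Variable f : R * R -> R.
Hypothesis f_cont : {within E, continuous f}.
Hypothesis f_fix : forall p, E p -> rb f p = f p.

Let hutch := hutchinson n m Lx Ly s g h.

Lemma Wmap_graph i j a : (1 <= i <= n)%N -> (1 <= j <= m)%N -> E a.1 ->
  let p := Lmap Lx Ly i j a.1 in
  Wmap Lx Ly s g h i j a = (p, s i j p * (a.2 - f a.1) + f p).
Proof.
move=> ir jr Ea; have La := Lmap_in_cell ir jr Ea.
rewrite /Wmap -(f_fix (in_cell_E La)) (rb_cell f La) /piece Linv_Lmap //.
by congr pair; rewrite /Fmap /Qmap; ring.
Qed.

Lemma graph_invariant : graph_on E f = hutch (graph_on E f).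
Proof.
apply/seteqP; split => [[p _] [/= Ep ->] | _ [i [j [ir [jr [[p _] [[/= Ep ->] ->]]]]]]].
  have [i [j Cp]] := E_cover Ep; have [ir jr _] := Cp; have Ep' := Linv_E Cp.
  exists i, j; do 2!split => //; exists (Linv i j p, f (Linv i j p)); split => //.
  by rewrite Wmap_graph //= Lmap_Linv // subrr mulr0 add0r.
rewrite Wmap_graph //= subrr mulr0 add0r; split => //.
exact: in_cell_E (Lmap_in_cell ir jr Ep).
Qed.

Lemma invariant_subset_graph A : compact A -> A `<=` E `*` setT ->
  A `<=` hutch A -> A `<=` graph_on E f.
Proof.
move=> cA AE AH w Aw; split; first exact: (AE w Aw).1.
have [c _ cmax] := compact_norm_max (f := snd) cA (ex_intro _ w Aw)
  (continuous_subspaceT (fun _ => cvg_snd)).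
have [p0 _ p0max] := compact_norm_max (@rect_compact R _ _ _ _) E_neq0 f_cont.
have dist k a : A a -> `|a.2 - f a.1| <= (`|c.2| + `|f p0|) * sig ^+ k.
  elim: k a => [|k IH] a Aa.
    by rewrite mulr1 (le_trans (ler_normB _ _)) // lerD ?cmax ?p0max //; case: (AE a Aa).
  have [i [j [ir [jr [b [Ab ->]]]]]] := AH a Aa; have [Eb _] := AE b Ab.
  rewrite Wmap_graph //= addrK normrM exprS mulrCA.
  by rewrite ler_pM ?IH //; apply/sigP/Lmap_in_cell.
exact: subr0_eq (geometric_bound_eq0 sig0 sig1 (fun k => dist k w Aw)).
Qed.

Lemma graph_subset_invariant A : closed A -> A !=set0 -> A `<=` graph_on E f ->
  hutch A `<=` A -> graph_on E f `<=` A.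
Proof.
move=> clA A0 AG HA [p _] [/= Ep ->]; apply: clA => B /nbhs_ballP [e e0 eB].
have AE : A `<=` E `*` setT by move=> a /AG [].
have [d d0 fd] := iffLR (within_continuousP _ _) f_cont p Ep e e0.
have de0 : 0 < Num.min d e by rewrite lt_min d0 e0.
have [a Aa] := invariant_base_dense A0 AE HA Ep de0.
rewrite !lt_min => -[/andP[a1d a1e] /andP[a2d a2e]].
have [Ea fa] := AG a Aa; exists a; split => //; apply: eB; split.
  by apply/ball_pairE; rewrite !(distrC p.1) !(distrC p.2).
rewrite -ball_normE /= fa; apply: fd => //.
by apply/ball_pairE; rewrite !(distrC p.1) !(distrC p.2).
Qed.

End Graph.

End Operator.

Lemma attractor_is_graph : exists f : R * R -> R,
  {within E, continuous f} /\
  graph_on E f = hutchinson n m Lx Ly s g h (graph_on E f) /\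
  (forall A, compact A -> A !=set0 -> A `<=` E `*` setT ->
     A = hutchinson n m Lx Ly s g h A -> A = graph_on E f).
Proof.
have [gx gx_inv] := continuous_inverse_family Lx_homeo.
have [gy gy_inv] := continuous_inverse_family Ly_homeo.
have [sig [sig0 sig1 sigP]] := s_uniform_bound.
have [f [f_cont f_fix]] := rb_fixpoint gx_inv gy_inv sig0 sig1 sigP.
have f_inv := graph_invariant gx_inv gy_inv f_fix.
exists f; split => //; split; first exact: f_inv.
move=> A cA A0 AE AH; have AG : A `<=` graph_on E f.
  by apply: (invariant_subset_graph gx_inv gy_inv sig0 sig1 sigP) => //; rewrite -AH.
apply/seteqP; split => //; apply: (graph_subset_invariant gx_inv gy_inv) => //.
- exact: compact_closed (@norm_hausdorff _ _) cA.
- by rewrite -AH.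
Qed.

End ReadBajraktarevic.

Theorem theorem1 (R : realType) (n m : nat) (x y : nat -> R) (z : nat -> nat -> R)
  (Lx Ly : nat -> R -> R) (q r : nat -> R -> R)
  (s g h : nat -> nat -> R * R -> R) :
  (1 <= n)%N -> (1 <= m)%N ->
  (forall i, (i < n)%N -> x i < x i.+1) ->
  (forall j, (j < m)%N -> y j < y j.+1) ->
  (forall i, (1 <= i <= n)%N ->
     homeo_on (cint (x 0%N) (x n)) (cint (x i.-1) (x i)) (Lx i) /\
     contraction_on (cint (x 0%N) (x n)) (Lx i) /\
     Lx i @` [set x 0%N; x n] = [set x i.-1; x i]) ->
  (forall j, (1 <= j <= m)%N ->
     homeo_on (cint (y 0%N) (y m)) (cint (y j.-1) (y j)) (Ly j) /\
     contraction_on (cint (y 0%N) (y m)) (Ly j) /\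
     Ly j @` [set y 0%N; y m] = [set y j.-1; y j]) ->
  (forall a, (a <= n)%N ->
     {within cint (y 0%N) (y m), continuous (q a)} /\
     forall l, (l <= m)%N -> q a (y l) = z a l) ->
  (forall b, (b <= m)%N ->
     {within cint (x 0%N) (x n), continuous (r b)} /\
     forall k, (k <= n)%N -> r b (x k) = z k b) ->
  (forall i j, (1 <= i <= n)%N -> (1 <= j <= m)%N ->
     let Eij := rect (x i.-1) (x i) (y j.-1) (y j) in
     lipschitz2_on Eij (s i j) /\
     (forall p, Eij p -> `|s i j p| < 1) /\
     (forall t, cint (y j.-1) (y j) t ->
        s i j (x i.-1, t) = 0 /\ s i j (x i, t) = 0) /\
     (forall t, cint (x i.-1) (x i) t ->
        s i j (t, y j.-1) = 0 /\ s i j (t, y j) = 0) /\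
     lipschitz2_on (rect (x 0%N) (x n) (y 0%N) (y m)) (g i j) /\
     lipschitz2_on Eij (h i j) /\
     (forall t, cint (y j.-1) (y j) t ->
        h i j (x i.-1, t) = q i.-1 t /\ h i j (x i, t) = q i t) /\
     (forall t, cint (x i.-1) (x i) t ->
        h i j (t, y j.-1) = r j.-1 t /\ h i j (t, y j) = r j t)) ->
  let E := rect (x 0%N) (x n) (y 0%N) (y m) in
  exists f : R * R -> R,
    {within E, continuous f} /\
    graph_on E f = hutchinson n m Lx Ly s g h (graph_on E f) /\
    (forall A : set ((R * R) * R),
       compact A -> A !=set0 -> A `<=` E `*` setT ->
       A = hutchinson n m Lx Ly s g h A ->
       A = graph_on E f).
Proof.
(* The endpoint conditions on [Lx], [Ly] and the data [q], [r], [z] beyond the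
   edge values of [h] are not needed. *)
move=> n1 m1 x_incr y_incr HLx HLy _ _ cell_data E.
have Lx_homeo i (ir : (1 <= i <= n)%N) := proj1 (HLx i ir).
have Ly_homeo j (jr : (1 <= j <= m)%N) := proj1 (HLy j jr).
have Lx_contraction i (ir : (1 <= i <= n)%N) := proj1 (proj2 (HLx i ir)).
have Ly_contraction j (jr : (1 <= j <= m)%N) := proj1 (proj2 (HLy j jr)).
exact: (attractor_is_graph n1 m1 x_incr y_incr Lx_homeo Ly_homeo
  Lx_contraction Ly_contraction cell_data).
Qed.
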